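(* Let $p\ne q$ be primes and $G=\mathbb{Z}_p^2\times\mathbb{Z}_q^2$. If $A\subseteq G$ and $B$ is a subgroup of $G$ such that $A\oplus B=G$ (i.e. $A+B=G$ and $|A||B|=|G|$), then $A$ is spectral.
   Context: For $w=(u,v)\in G$ ($u\in\mathbb{Z}_p^2$, $v\in\mathbb{Z}_q^2$) define $\chi_w(a,b)=\exp\big(2\pi i(\tfrac{u\cdot a}{p}+\tfrac{v\cdot b}{q})\big)$ and $\chi(A)=\sum_{s\in A}\chi(s)$. $A$ is spectral if there is $\Lambda\subseteq G$ with $|\Lambda|=|A|$ and $\chi_{\lambda-\lambda'}(A)=0$ for all distinct $\lambda,\lambda'\in\Lambda$. *)

From HB Require Import structures.
From mathcomp Require Import all_boot all_order all_algebra.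
From mathcomp Require Import reals trigo.
From mathcomp Require Import complex.
Set Implicit Arguments. Unset Strict Implicit. Unset Printing Implicit Defensive.
Import Order.TTheory GRing.Theory Num.Theory.
Local Open Scope ring_scope.

Definition Gpq (p q : nat) : finType := (('Z_p * 'Z_p) * ('Z_q * 'Z_q))%type.

Definition dotZ (n : nat) (u a : 'Z_n * 'Z_n) : nat :=
  nat_of_ord (u.1 * a.1 + u.2 * a.2).

Definition expi (R : realType) (t : R) : R[i] :=
  Complex (cos (2 * pi * t)) (sin (2 * pi * t)).

Definition chi (R : realType) (p q : nat) (w s : Gpq p q) : R[i] :=
  expi ((dotZ w.1 s.1)%:R / p%:R + (dotZ w.2 s.2)%:R / q%:R).

Definition chiS (R : realType) (p q : nat) (w : Gpq p q) (A : {set Gpq p q}) : R[i] :=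
  \sum_(s in A) chi R w s.

Definition spectral (R : realType) (p q : nat) (A : {set Gpq p q}) : Prop :=
  exists Lambda : {set Gpq p q},
    #|Lambda| = #|A| /\
    forall l l', l \in Lambda -> l' \in Lambda -> l != l' ->
      chiS R (l - l') A = 0.

Definition is_subgroup (p q : nat) (B : {set Gpq p q}) : Prop :=
  0 \in B /\ forall x y, x \in B -> y \in B -> x - y \in B.

Definition direct_sum_eq_G (p q : nat) (A B : {set Gpq p q}) : Prop :=
  (forall g : Gpq p q, exists a b, [/\ a \in A, b \in B & g = a + b]) /\
  (#|A| * #|B| = #|[set: Gpq p q]|)%N.

From HB Require Import structures.
From mathcomp Require Import all_boot all_order all_algebra.
From mathcomp Require Import reals trigo complex.
From mathcomp Require Import ring lra.
Set Implicit Arguments.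
Unset Strict Implicit.
Unset Printing Implicit Defensive.

Import Order.TTheory GRing.Theory Num.Theory.
Local Open Scope ring_scope.

(* The spectrum is the annihilator L of B, the set of characters trivial on B.
   Orthogonality of characters gives |L| |B| = |G| = |A| |B|.  For distinct
   l, l' in L the character chi_(l - l') is nontrivial on G but trivial on B,
   so, since every g in G is uniquely a + b, 0 = sum_G chi_(l - l')
   = sum_(a in A) sum_(b in B) chi_(l - l')(a + b) = |B| chi_(l - l')(A).
   Only the bicharacter properties of (w, s) |-> chi_w(s) are used: the
   argument works for every finite abelian group. *)

Lemma sum_tiling (G : finZmodType) (V : nmodType) (A B : {set G}) (F : G -> V) :
    (forall g, exists a b, [/\ a \in A, b \in B & g = a + b]) ->
    (#|A| * #|B| = #|G|)%N ->
  \sum_g F g = \sum_(a in A) \sum_(b in B) F (a + b).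
Proof.
move=> cover card; pose add (x : G * G) := x.1 + x.2.
have addT : add @: setX A B = setT.
  apply/setP => g; rewrite inE; have [a [b [aA bB ->]]] := cover g.
  by apply/imsetP; exists (a, b); rewrite ?in_setX ?aA ?bB.
have add_inj : {in setX A B &, injective add}.
  by apply/imset_injP; rewrite addT cardsX cardsT card.
have -> : \sum_g F g = \sum_(g in add @: setX A B) F g.
  by apply: eq_bigl => g; rewrite addT inE.
rewrite big_imset //= pair_big_dep /=.
by apply: eq_bigl => -[a b]; rewrite in_setX.
Qed.

Lemma sum_char_eq0 (G : finZmodType) (C : idomainType) (H : {pred G})
    (f : G -> C) (h0 : G) :
    zmod_closed H -> {morph f : x y / x + y >-> x * y} ->
    h0 \in H -> f h0 != 1 ->
  \sum_(h in H) f h = 0.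
Proof.
move=> [H0 subH] fD h0H fh0.
have shiftH h : (h + h0 \in H) = (h \in H).
  apply/idP/idP => [/subH/(_ h0H)|hH]; first by rewrite addrK.
  by rewrite -[h0]opprK subH // -sub0r subH.
have : \sum_(h in H) f h = (\sum_(h in H) f h) * f h0.
  rewrite big_distrl (reindex_inj (addIr h0)) /=.
  by apply: eq_big => [h|h _]; rewrite ?shiftH ?fD.
move/eqP; rewrite -subr_eq0 -{1}[\sum_(h in H) f h]mulr1 -mulrBr mulf_eq0.
by rewrite subr_eq0 [1 == _]eq_sym (negbTE fh0) orbF => /eqP.
Qed.

Section Annihilator.

Variables (G : finZmodType) (C : numDomainType) (e : G -> G -> C).
Hypothesis eDr : forall w, {morph e w : s t / s + t >-> s * t}.
Hypothesis e0r : forall w, e w 0 = 1.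
Hypothesis eC : forall w s, e w s = e s w.
Hypothesis e_nondeg : forall s, s != 0 -> exists w, e w s != 1.

Lemma eDl s : {morph e^~ s : w w' / w + w' >-> w * w'}.
Proof. by move=> w w'; rewrite !(eC _ s) eDr. Qed.

Definition annihilator (B : {set G}) : {set G} :=
  [set w | [forall b in B, e w b == 1]].

Lemma annihilatorP (B : {set G}) w :
  reflect {in B, forall b, e w b = 1} (w \in annihilator B).
Proof. by rewrite inE; apply: (iffP forall_inP) => h b /h => [/eqP|->]. Qed.

Lemma annihilator_sub (B : {set G}) :
  {in annihilator B &, forall l l', l - l' \in annihilator B}.
Proof.
move=> l l' /annihilatorP el /annihilatorP el'; apply/annihilatorP => b bB.
rewrite eDl el // mul1r -[RHS](e0r b) -(addNr l') eDr (eC b l') el' //.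
by rewrite mulr1 eC.
Qed.

Lemma sum_char_subgroup (B : {set G}) w : zmod_closed B ->
  \sum_(b in B) e w b = if w \in annihilator B then #|B|%:R else 0.
Proof.
move=> Bz; case: annihilatorP => [ew1|ew].
  by rewrite (eq_bigr (fun=> 1)) // sumr_const.
have [b bB eb] : exists2 b, b \in B & e w b != 1.
  apply/exists_inP; rewrite -negb_forall_in; apply: contra_notN ew.
  by move=> /forall_inP h b /h /eqP.
exact: sum_char_eq0 Bz (eDr w) bB eb.
Qed.

Lemma sum_char_dual s : \sum_w e w s = if s == 0 then #|G|%:R else 0.
Proof.
have [->|s0] := eqVneq s 0; first by rewrite (eq_bigr (fun=> 1)) // sumr_const.
have [w ew] := e_nondeg s0.
rewrite (_ : \sum_w _ = \sum_(w in predT) e w s) //.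
exact: sum_char_eq0 (eDl s) _ ew.
Qed.

Lemma card_annihilator (B : {set G}) :
  zmod_closed B -> (#|annihilator B| * #|B|)%N = #|G|.
Proof.
move=> Bz; have B0 : 0 \in B by case: Bz.
apply/eqP; rewrite -(eqr_nat C); apply/eqP.
transitivity (\sum_w \sum_(b in B) e w b).
  under eq_bigr do rewrite sum_char_subgroup //.
  by rewrite -big_mkcond sumr_const natrM mulr_natl.
rewrite exchange_big (bigD1 0) //= sum_char_dual eqxx big1 ?addr0 //.
by move=> b /andP[_ b0]; rewrite sum_char_dual (negbTE b0).
Qed.

Theorem annihilator_spectrum (A B : {set G}) :
    zmod_closed B ->
    (forall g, exists a b, [/\ a \in A, b \in B & g = a + b]) ->
    (#|A| * #|B| = #|G|)%N ->
  #|annihilator B| = #|A| /\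
  {in annihilator B &, forall l l', l != l' -> \sum_(a in A) e (l - l') a = 0}.
Proof.
move=> Bz cover card.
have B_gt0 : (0 < #|B|)%N by apply/card_gt0P; exists 0; case: Bz.
split=> [|l l' lL l'L ll'].
  by apply/eqP; rewrite -(eqn_pmul2r B_gt0) card_annihilator ?card.
have /annihilatorP dL := annihilator_sub lL l'L.
have := sum_char_dual (l - l'); rewrite subr_eq0 (negbTE ll').
under eq_bigr do rewrite eC.
rewrite (sum_tiling _ cover card).
under eq_bigr do under eq_bigr => b bB do rewrite eDr (dL b bB) mulr1.
under eq_bigr do rewrite sumr_const.
by rewrite sumrMnl => /eqP; rewrite mulrn_eq0 eqn0Ngt B_gt0 => /eqP.
Qed.

End Annihilator.

Section ComplexExponential.

Variable R : realType.

Lemma expiD : {morph @expi R : x y / x + y >-> x * y}.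
Proof.
move=> x y; rewrite /expi mulrDr cosD sinD; apply/eqP.
by rewrite eq_complex /=; apply/andP; split; apply/eqP; ring.
Qed.

Lemma expi_nat n : expi (n%:R : R) = 1.
Proof.
elim: n => [|n IHn]; first by rewrite /expi mulr0 cos0 sin0.
by rewrite -addn1 natrD expiD IHn mul1r /expi mulr1 mulr_natl cos2pi sin2pi.
Qed.

Lemma expi_neq1 (t : R) : 0 < t < 1 -> expi t != 1.
Proof.
move=> /andP[t_gt0 t_lt1].
apply/negP => /eqP/(congr1 (@complex.Re R)) /= cos1.
have : `|cos (pi * t)| = 1.
  apply/eqP; rewrite -sqr_norm_eq1; apply/eqP; move: cos1.
  have -> : 2 * pi * t = (pi * t) *+ 2 by rewrite mulr2n; ring.
  by rewrite cos_mulr2n; lra.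
move/cos1sin0/eqP; apply/negP; rewrite gt_eqF // sin_gt0_pi //.
by rewrite mulr_gt0 ?pi_gt0 //= gtr_pMr ?pi_gt0.
Qed.

End ComplexExponential.

Definition dot2 (S : comNzRingType) (u a : S * S) : S := u.1 * a.1 + u.2 * a.2.

Section Dot2.

Variable S : comNzRingType.
Implicit Types u a : S * S.

Lemma dot2Dr u : {morph dot2 u : a b / a + b}.
Proof. by move=> a b; rewrite /dot2 !mulrDr addrACA. Qed.

Lemma dot2C u a : dot2 u a = dot2 a u.
Proof. by rewrite /dot2 mulrC [u.2 * _]mulrC. Qed.

Lemma dot20l a : dot2 0 a = 0.
Proof. by rewrite /dot2 !mul0r addr0. Qed.

Lemma dot2_nondeg a : a != 0 -> exists u, dot2 u a != 0.
Proof.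
case: a => a1 a2 a_neq0; have [a10|a1_neq0] := eqVneq a1 0.
  exists (0, 1); rewrite /dot2 /= mul0r mul1r add0r.
  by apply: contraNneq a_neq0 => ->; rewrite a10.
by exists (1, 0); rewrite /dot2 /= mul0r mul1r addr0.
Qed.

End Dot2.

Section Characters.

Variable R : realType.

Definition expZ n (x : 'Z_n) : R[i] := expi (x%:R / n%:R).

Lemma expZ0 n : expZ (0 : 'Z_n) = 1.
Proof. by rewrite /expZ mul0r (expi_nat R 0). Qed.

Lemma expZD n : (1 < n)%N -> {morph @expZ n : x y / x + y >-> x * y}.
Proof.
move=> n_gt1 x y; rewrite /expZ -expiD -mulrDl -natrD.
have -> : ((x + y)%R : nat) = ((x + y) %% n)%N.
  exact: (congr1 (fun m => ((x + y) %% m)%N) (Zp_cast n_gt1)).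
rewrite [in RHS](divn_eq (x + y) n) natrD natrM mulrDl mulfK.
  by rewrite expiD expi_nat mul1r.
by rewrite pnatr_eq0 -lt0n ltnW.
Qed.

Lemma expZ_neq1 n (x : 'Z_n) : (1 < n)%N -> x != 0 -> expZ x != 1.
Proof.
move=> n_gt1 x_neq0; apply: expi_neq1.
have x_lt_n : (x < n)%N by rewrite -[X in (_ < X)%N](Zp_cast n_gt1).
have x_gt0 : (0 < x)%N.
  by rewrite lt0n; apply: contraNneq x_neq0 => x0; apply/eqP/val_inj.
have n_gt0 : (0 : R) < n%:R by rewrite ltr0n ltnW.
by rewrite divr_gt0 ?ltr0n ?(ltnW n_gt1) //= ltr_pdivrMr // mul1r ltr_nat.
Qed.

Variables (p q : nat).
Hypotheses (p_gt1 : (1 < p)%N) (q_gt1 : (1 < q)%N).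

Lemma chiE (w s : Gpq p q) :
  chi R w s = expZ (dot2 w.1 s.1) * expZ (dot2 w.2 s.2).
Proof. by rewrite /chi expiD. Qed.

Lemma chiDr (w : Gpq p q) : {morph chi R w : s t / s + t >-> s * t}.
Proof. by move=> s t; rewrite !chiE !dot2Dr !expZD // mulrACA. Qed.

Lemma chi0r (w : Gpq p q) : chi R w 0 = 1.
Proof. by rewrite chiE !(dot2C w.1) (dot2C w.2) !dot20l !expZ0 mulr1. Qed.

Lemma chiC (w s : Gpq p q) : chi R w s = chi R s w.
Proof. by rewrite !chiE (dot2C w.1) (dot2C w.2). Qed.

Lemma chi_nondeg (s : Gpq p q) : s != 0 -> exists w, chi R w s != 1.
Proof.
case: s => s1 s2 s_neq0; have [s10|s1_neq0] := eqVneq s1 0.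
  have s2_neq0 : s2 != 0 by apply: contraNneq s_neq0 => ->; rewrite s10.
  have [u us2] := dot2_nondeg s2_neq0.
  by exists (0, u); rewrite chiE /= dot20l expZ0 mul1r expZ_neq1.
have [u us1] := dot2_nondeg s1_neq0.
by exists (u, 0); rewrite chiE /= dot20l expZ0 mulr1 expZ_neq1.
Qed.

End Characters.

(* MathComp does not equip products of finite Z-modules with the joint
   structure needed to use G = Z_p^2 x Z_q^2 as a finZmodType. *)
HB.instance Definition _ (U V : finZmodType) := GRing.Zmodule.on (U * V)%type.

Theorem corollary5p2 (R : realType) (p q : nat) :
  prime p -> prime q -> p != q ->
  forall (A B : {set Gpq p q}),
    is_subgroup B -> direct_sum_eq_G A B -> spectral R A.
Proof.
move=> p_prime q_prime _ A B Bz [cover card].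
have [p_gt1 q_gt1] := (prime_gt1 p_prime, prime_gt1 q_prime).
pose G : finZmodType := (('Z_p * 'Z_p) * ('Z_q * 'Z_q))%type.
have [card_ann orth_ann] := annihilator_spectrum (G := G)
  (chiDr R p_gt1 q_gt1) (@chi0r R p q) (@chiC R p q) (chi_nondeg R p_gt1 q_gt1)
  Bz cover (etrans card (cardsT _)).
by exists (annihilator (@chi R p q) B); split=> // l l' lL l'L; apply: orth_ann.
Qed.
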